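(* Let $0<w_1<w_2<\dots<w_n$ be integers with $\sum_{i=1}^n w_i<2^n-1$, such that $w([i])\ge 2^i-1$ for all $i\in[n-1]$. Let $\Delta\le 2^n/(3n^2)$ satisfy $d\le\Delta$. Then $w_i\le 2^{i-1}+\Delta$ for all $i\in[n]$.
   Context: Write $[i]=\{1,\dots,i\}$ and $w(S)=\sum_{j\in S}w_j$ for $S\subseteq[n]$. The frequency is $f_t=\#\{S\subseteq[n]:w(S)=t\}$. The parameter is $d=\sum_{0\le t<2^n}\max\{0,f_t-1\}$; under $\sum_i w_i<2^n-1$ this equals $\#\{0\le t<2^n:f_t=0\}$. *)

From mathcomp Require Import all_boot all_order all_algebra.
Set Implicit Arguments. Unset Strict Implicit. Unset Printing Implicit Defensive.

(* Weights w_1..w_n are encoded as w : nat -> nat, with w_i = w i (i = 1..n).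
   A subset S of [n] is a set of ordinals 'I_n, the element i : 'I_n standing
   for the index i.+1. *)

Definition wsum (n : nat) (w : nat -> nat) (S : {set 'I_n}) : nat :=
  \sum_(j in S) w j.+1.

Definition freq (n : nat) (w : nat -> nat) (t : nat) : nat :=
  #|[set S : {set 'I_n} | wsum w S == t]|.

(* d = sum_{0 <= t < 2^n} max(0, f_t - 1) *)
Definition dpar (n : nat) (w : nat -> nat) : nat :=
  \sum_(0 <= t < 2 ^ n) (freq n w t - 1).

From mathcomp Require Import all_boot all_order all_algebra.
From mathcomp Require Import zify.
Import Order.TTheory GRing.Theory Num.Theory.

(* All 2^n subset sums lie in [0, 2^n), so 2^n = sum_t f_t <= d + #{t : f_t > 0}.
   Since the weights increase, a subset with sum below w_i avoids w_i, ..., w_n,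
   so at most 2^(i-1) values below w_i are attained, and at most 2^n - w_i values
   in [w_i, 2^n).  Hence 2^n <= d + 2^(i-1) + 2^n - w_i. *)

Set Implicit Arguments.
Unset Strict Implicit.
Unset Printing Implicit Defensive.

Lemma card_setId_sum (T : finType) (A : {set T}) (P : pred T) :
  #|[set x in A | P x]| = \sum_(x in A) P x.
Proof.
rewrite -sum1_card big_mkcond [RHS]big_mkcond; apply: eq_bigr => x _.
by rewrite inE; case: (x \in A); case: (P x).
Qed.

Lemma sum_nat_eqn (x m : nat) : \sum_(0 <= t < m) (x == t) = (x < m).
Proof.
rewrite -big_mkcond; under eq_bigl do rewrite eq_sym.
by rewrite big_nat1_eq; case: (x < m).
Qed.

Lemma card_ord_ltn (n k : nat) : #|[set j : 'I_n | j < k]| <= k.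
Proof.
rewrite cardE -(size_map val) -[X in _ <= X](size_iota 0 k).
apply: uniq_leq_size; first by rewrite (map_inj_uniq val_inj) enum_uniq.
by move=> t /mapP[j]; rewrite mem_enum inE => ltjk ->; rewrite mem_iota.
Qed.

Section SubsetSums.
Variables (n : nat) (w : nat -> nat).

Lemma wsum_ge (S : {set 'I_n}) j : j \in S -> w j.+1 <= wsum w S.
Proof. by move=> jS; rewrite /wsum (bigD1 j) //= leq_addr. Qed.

Lemma wsumS (S T : {set 'I_n}) : S \subset T -> wsum w S <= wsum w T.
Proof.
move=> sST; rewrite /wsum [X in X <= _]big_mkcond [X in _ <= X]big_mkcond.
by apply: leq_sum => j _; case: ifP => // /(subsetP sST) ->.
Qed.

Lemma wsumT : wsum w [set: 'I_n] = \sum_(1 <= i < n.+1) w i.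
Proof. by rewrite big_add1 big_mkord; apply: eq_bigl => j; rewrite inE. Qed.

Lemma sum_card_wsum_eq (F : {set {set 'I_n}}) m :
  \sum_(0 <= t < m) #|[set S in F | wsum w S == t]| =
  #|[set S in F | wsum w S < m]|.
Proof.
under eq_bigr do rewrite card_setId_sum.
by rewrite exchange_big card_setId_sum; under eq_bigr do rewrite sum_nat_eqn.
Qed.

Lemma sum_attained_le (B : {set 'I_n}) m :
  (forall S, wsum w S < m -> S \subset B) ->
  \sum_(0 <= t < m) (0 < freq n w t) <= 2 ^ #|B|.
Proof.
move=> small_sub; apply: (@leq_trans #|[set S in powerset B | wsum w S < m]|).
  rewrite -sum_card_wsum_eq big_nat [X in _ <= X]big_nat.
  apply: leq_sum => t /andP[_ ltm].
  have [// | /card_gt0P[S]] := posnP (freq n w t).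
  rewrite inE => /eqP St; apply/card_gt0P; exists S.
  by rewrite !inE St eqxx small_sub ?St.
by rewrite -card_powerset subset_leq_card // setIdE subsetIl.
Qed.

Lemma sum_freq m : (forall S : {set 'I_n}, wsum w S < m) ->
  \sum_(0 <= t < m) freq n w t = 2 ^ n.
Proof.
move=> wsum_lt.
transitivity (\sum_(0 <= t < m) #|[set S in [set: {set 'I_n}] | wsum w S == t]|).
  by apply: eq_bigr => t _; apply: eq_card => S; rewrite !inE.
rewrite sum_card_wsum_eq -[in RHS](card_ord n) -cardsT -card_powerset powersetT.
by apply: eq_card => S; rewrite !inE wsum_lt.
Qed.

Lemma pow_le_dpar_add_attained : (forall S : {set 'I_n}, wsum w S < 2 ^ n) ->
  2 ^ n <= dpar n w + \sum_(0 <= t < 2 ^ n) (0 < freq n w t).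
Proof.
move=> wsum_lt; rewrite -{1}(sum_freq wsum_lt) /dpar -big_split leq_sum // => t _.
by case: (freq n w t) => //= k; rewrite subn1 addn1.
Qed.

Hypothesis w_incr : forall i, 1 <= i < n -> w i < w i.+1.

Lemma w_homo_leq : {in [pred k | 0 < k <= n] &, {homo w : i j / i <= j}}.
Proof.
apply: homo_leq_in; [exact: leqnn | exact: leq_trans | | ].
  by move=> i j; rewrite !inE => ? ? k ?; rewrite inE; lia.
by move=> i; rewrite !inE => /andP[i_gt0 _] /andP[_ ltin]; rewrite ltnW ?w_incr ?i_gt0.
Qed.

Lemma wsum_lt_w_subset i : 0 < i <= n ->
  forall S : {set 'I_n}, wsum w S < w i -> S \subset [set j : 'I_n | j < i.-1].
Proof.
move=> hi S lt_Si; apply/subsetP => j jS; rewrite inE ltnNge.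
apply: contraL lt_Si => le_ij; rewrite -leqNgt (leq_trans _ (wsum_ge jS)) //.
by rewrite w_homo_leq ?inE ?ltn_ord //; lia.
Qed.

Lemma sum_attained_below_w i :
  0 < i <= n -> \sum_(0 <= t < w i) (0 < freq n w t) <= 2 ^ i.-1.
Proof.
move=> hi; apply: leq_trans (sum_attained_le (wsum_lt_w_subset hi)) _.
by rewrite leq_exp2l ?card_ord_ltn.
Qed.

Lemma w_le_pow_add_dpar i :
  \sum_(1 <= k < n.+1) w k < 2 ^ n - 1 -> 0 < i <= n ->
  w i <= 2 ^ i.-1 + dpar n w.
Proof.
move=> tot hi.
have wsum_lt (S : {set 'I_n}) : wsum w S < 2 ^ n.
  by rewrite (leq_ltn_trans (wsumS (subsetT S))) // wsumT (leq_trans tot) ?leq_subr.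
have w_lt : w i < 2 ^ n.
  have lt_i1n : i.-1 < n by lia.
  have := wsum_ge (set11 (Ordinal lt_i1n)); rewrite /= prednK; last by lia.
  by move/leq_ltn_trans; apply.
have := pow_le_dpar_add_attained wsum_lt.
rewrite (@big_cat_nat _ _ _ (w i)) //=; last exact: ltnW.
have below := sum_attained_below_w hi.
have above : \sum_(w i <= t < 2 ^ n) (0 < freq n w t) <= 2 ^ n - w i.
  rewrite -[X in _ <= X]muln1 -sum_nat_const_nat leq_sum // => t _.
  by case: (0 < _).
lia.
Qed.

End SubsetSums.

Theorem lemma3p3 (R : realFieldType) (n : nat) (w : nat -> nat) (Delta : R) :
  (forall i, 1 <= i <= n -> 0 < w i)%N ->
  (forall i, 1 <= i < n -> w i < w i.+1)%N ->
  (\sum_(1 <= i < n.+1) w i < 2 ^ n - 1)%N ->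
  (forall i, 1 <= i <= n.-1 -> 2 ^ i - 1 <= \sum_(1 <= j < i.+1) w j)%N ->
  (Delta <= (2 ^ n)%:R / (3 * n ^ 2)%:R)%R ->
  ((dpar n w)%:R <= Delta)%R ->
  forall i, (1 <= i <= n)%N -> ((w i)%:R <= (2 ^ i.-1)%:R + Delta)%R.
Proof.
move=> _ w_incr tot _ _ d_le_Delta i hi.
apply: le_trans (_ : ((2 ^ i.-1 + dpar n w)%N%:R <= _)%R).
  by rewrite ler_nat w_le_pow_add_dpar.
by rewrite natrD lerD2l.
Qed.
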